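(* Let $X$ be a metric space, $A\in\mathscr{A}(X)$, and suppose $1\le n:=\mathrm{rk}(A)<\infty$. Then the difference of any two elements of $H(A)$ is uniformly bounded on $X$, so the sup norm $\|g-h\|_\infty$ defines a metric on $H(A)$, and there exists an affine isometry from $H(A)$ onto $l^n_\infty$. In particular $H(A)$ is injective.
   Context: For $f\colon X\to\mathbb{R}$, $A(f)$ denotes the set of unordered pairs $\{x,y\}$ of points of $X$ ($x=y$ allowed) with $f(x)+f(y)=d(x,y)$. $\Delta(X)=\{f: f(x)+f(y)\ge d(x,y)\ \forall x,y\}$, $\mathrm{E}'(X)=\{f\in\Delta(X): \bigcup A(f)=X\}$, and $\mathscr{A}(X)=\{A(f): f\in\mathrm{E}'(X)\}$. For $A\in\mathscr A(X)$, $H(A)=\{g\in\mathbb{R}^X: g(x)+g(y)=d(x,y)\ \forall\{x,y\}\in A\}$ (an affine subspace of $\mathbb{R}^X$) and $\mathrm{rk}(A)=\dim H(A)\in\{0,1,2,\dots\}\cup\{\infty\}$. A metric space is injective if every 1-Lipschitz map into it from a subset of a metric space extends 1-Lipschitz to the whole space. *)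

From HB Require Import structures.
From mathcomp Require Import all_boot all_order all_algebra.
From mathcomp Require Import all_classical all_reals.
From mathcomp Require Import Rstruct.
Set Implicit Arguments. Unset Strict Implicit. Unset Printing Implicit Defensive.
Import Order.TTheory GRing.Theory Num.Theory.
Local Open Scope ring_scope.

Notation R := Rdefinitions.R.

Definition is_metric_on (T : Type) (S : T -> Prop) (D : T -> T -> R) : Prop :=
  (forall x y, S x -> S y -> 0 <= D x y) /\
  (forall x y, S x -> S y -> (D x y = 0 <-> x = y)) /\
  (forall x y, S x -> S y -> D x y = D y x) /\
  (forall x y z, S x -> S y -> S z -> D x z <= D x y + D y z).

Definition is_metric (X : Type) (d : X -> X -> R) : Prop :=
  is_metric_on (fun _ => True) d.

Definition in_Delta (X : Type) (d : X -> X -> R) (f : X -> R) : Prop :=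
  forall x y, d x y <= f x + f y.

(* A(f), as a (symmetric) relation: {x,y} in A(f) iff f x + f y = d x y *)
Definition Aset (X : Type) (d : X -> X -> R) (f : X -> R) : X -> X -> Prop :=
  fun x y => f x + f y = d x y.

(* E'(X) : f in Delta(X) and the union of A(f) is X *)
Definition in_E' (X : Type) (d : X -> X -> R) (f : X -> R) : Prop :=
  in_Delta d f /\ forall x, exists y, Aset d f x y.

Definition in_scrA (X : Type) (d : X -> X -> R) (A : X -> X -> Prop) : Prop :=
  exists f, in_E' d f /\ A = Aset d f.

Definition HA (X : Type) (d : X -> X -> R) (A : X -> X -> Prop) (g : X -> R)
  : Prop := forall x y, A x y -> g x + g y = d x y.

Definition affine_dim (X : Type) (S : (X -> R) -> Prop) (n : nat) : Prop :=
  exists (h0 : X -> R) (b : 'I_n -> X -> R),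
    (forall c : 'I_n -> R, (forall x, \sum_(i < n) c i * b i x = 0) ->
        forall i, c i = 0) /\
    (forall g, S g <-> exists c : 'I_n -> R,
        forall x, g x = h0 x + \sum_(i < n) c i * b i x).

Definition rk_eq (X : Type) (d : X -> X -> R) (A : X -> X -> Prop) (n : nat)
  : Prop := affine_dim (HA d A) n.

Definition supdist (X : Type) (g h : X -> R) : R :=
  sup [set `|g x - h x| | x in [set: X]].

Definition linf_dist (n : nat) (u v : 'I_n -> R) : R :=
  \big[Num.max/0]_(i < n) `|u i - v i|.

Definition affine_isometry_onto (X : Type) (S : (X -> R) -> Prop)
  (D : (X -> R) -> (X -> R) -> R) (n : nat) (F : (X -> R) -> ('I_n -> R))
  : Prop :=
  (forall g h (t : R), S g -> S h ->
     F (fun x => t * g x + (1 - t) * h x) = (fun i => t * F g i + (1 - t) * F h i)) /\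
  (forall g h, S g -> S h -> linf_dist (F g) (F h) = D g h) /\
  (forall v : 'I_n -> R, exists g, S g /\ F g = v).

Definition injective_metric (T : Type) (S : T -> Prop) (D : T -> T -> R) : Prop :=
  forall (Y : Type) (dY : Y -> Y -> R) (Z : Y -> Prop) (phi : Y -> T),
    is_metric dY ->
    (forall z, Z z -> S (phi z)) ->
    (forall z z', Z z -> Z z' -> D (phi z) (phi z') <= dY z z') ->
    exists psi : Y -> T,
      (forall y, S (psi y)) /\
      (forall y y', D (psi y) (psi y') <= dY y y') /\
      (forall z, Z z -> psi z = phi z).

From Stdlib Require Import Relation_Operators.
From mathcomp Require Import all_boot all_order all_algebra.
From mathcomp Require Import all_classical all_reals.
From mathcomp Require Import Rstruct.
From mathcomp Require Import ring lra.
Import Order.TTheory GRing.Theory Num.Theory.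
Local Open Scope ring_scope.
Set Implicit Arguments. Unset Strict Implicit. Unset Printing Implicit Defensive.

(* The direction space V = H(A) - H(A) consists of the u with u x + u y = 0 for
   every {x, y} in A, so |u| is constant on each connected component of the graph
   A.  Since dim V = n, a greedy choice gives n essential points p_k (some u in V
   is nonzero there) in pairwise distinct components, and restricting to those
   components yields a dual basis e_k of V with e_k (p_j) = [k = j].  Every point
   at which V does not vanish identically is then linked to some p_k, hence
   ||g - h||_oo = max_k |g (p_k) - h (p_k)| on H(A) and
   g |-> (g (p_k) - h_0 (p_k))_k is an affine isometry onto l^n_oo, which is
   injective by McShane's extension applied coordinatewise. *)

Lemma sup_attained (S : set R) (M : R) :
  S M -> (forall s, S s -> s <= M) -> sup S = M.
Proof.
move=> SM ubM; apply/eqP; rewrite eq_le ge_sup //=; last by exists M.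
by apply: sup_upper_bound => //; split; [exists M | exists M].
Qed.

Section LinfDist.
Variable n : nat.
Implicit Types u v w : 'I_n -> R.

Lemma linf_dist_ge0 u v : 0 <= linf_dist u v.
Proof. exact: bigmax_ge_id. Qed.

Lemma ler_linf_dist u v k : `|u k - v k| <= linf_dist u v.
Proof. exact: le_bigmax. Qed.

Lemma linf_dist_le u v M :
  0 <= M -> (forall k, `|u k - v k| <= M) -> linf_dist u v <= M.
Proof. by move=> M_ge0 le_M; apply: bigmax_le. Qed.

Lemma linf_dist_attained (n_gt0 : (0 < n)%N) u v :
  exists k, linf_dist u v = `|u k - v k|.
Proof. by eexists; apply: (bigmax_eq_arg _ (Ordinal n_gt0)). Qed.

Lemma is_metric_linf_dist : is_metric (@linf_dist n).
Proof.
split; [|split; [|split]] => [u v _ _|u v _ _|u v _ _|u v w _ _ _].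
- exact: linf_dist_ge0.
- split=> [uv0|->]; last by apply/eqP; rewrite eq_le linf_dist_ge0 andbT;
    apply: linf_dist_le => // k; rewrite subrr normr0.
  apply/funext => k; apply/eqP; rewrite -subr_eq0 -normr_le0 -uv0.
  exact: ler_linf_dist.
- by apply: eq_bigr => k _; rewrite distrC.
- apply: linf_dist_le => [|k].
    by rewrite addr_ge0 // linf_dist_ge0.
  apply: le_trans (ler_distD (v k) _ _) _.
  by rewrite lerD // ler_linf_dist.
Qed.

End LinfDist.

(* McShane's extension [y |-> inf_(z in Z) (f z + dY z y)]. *)
Lemma real_lipschitz_extension (Y : Type) (dY : Y -> Y -> R) (Z : Y -> Prop)
    (f : Y -> R) :
  is_metric dY -> (forall z z', Z z -> Z z' -> `|f z - f z'| <= dY z z') ->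
  exists F : Y -> R, (forall y y', `|F y - F y'| <= dY y y') /\
    forall z, Z z -> F z = f z.
Proof.
move=> [dY_ge0 [dY0 [dY_sym dY_tri]]] f_lip.
have dYyy y : dY y y = 0 by apply/(dY0 y y I I).
have tri y y' y'' : dY y y'' <= dY y y' + dY y' y'' := dY_tri y y' y'' I I I.
have sym y y' : dY y y' = dY y' y := dY_sym y y' I I.
have [[z0 Zz0]|noZ] := pselect (exists z, Z z); last first.
  exists (fun=> 0); split=> [y y'|z Zz]; last by case: noZ; exists z.
  by rewrite subrr normr0 dY_ge0.
pose T y := [set f z + dY z y | z in Z]%classic.
have T_lb y : has_lbound (T y).
  exists (f z0 - dY y z0) => _ [z Zz <-].
  have := f_lip z z0 Zz Zz0; rewrite ler_norml => /andP[le_f _].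
  have := tri z y z0; lra.
have T_n0 y : (T y !=set0)%classic by exists (f z0 + dY z0 y), z0.
have inf_le y z : Z z -> inf (T y) <= f z + dY z y.
  by move=> Zz; apply: (ge_inf (T_lb y)); exists z.
have inf_lip y y' : inf (T y) - inf (T y') <= dY y y'.
  suff : inf (T y) - dY y y' <= inf (T y') by lra.
  apply: lb_le_inf => // _ [z Zz <-].
  have := inf_le y z Zz; have := tri z y' y; rewrite (sym y' y); lra.
exists (fun y => inf (T y)); split=> [y y'|z Zz].
  rewrite ler_norml inf_lip andbT; have := inf_lip y' y; rewrite (sym y' y); lra.
apply/eqP; rewrite eq_le; apply/andP; split.
  by have := inf_le z z Zz; rewrite dYyy addr0.
apply: lb_le_inf => // _ [z' Zz' <-].
have := f_lip z z' Zz Zz'; rewrite ler_norml (sym z' z) => /andP[_]; lra.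
Qed.

Lemma injective_metric_linf n : injective_metric (fun _ => True) (@linf_dist n).
Proof.
move=> Y dY Z phi dY_metric _ phi_lip.
have dY_ge0 y y' : 0 <= dY y y' := dY_metric.1 y y' I I.
have coord_lip k z z' : Z z -> Z z' -> `|phi z k - phi z' k| <= dY z z'.
  by move=> Zz Zz'; apply: le_trans (ler_linf_dist _ _ k) (phi_lip z z' Zz Zz').
have [psi psi_spec] := choice (fun k =>
  real_lipschitz_extension (f := fun y => phi y k) dY_metric (coord_lip k)).
exists (fun y k => psi k y); split=> // ; split=> [y y'|z Zz].
  by apply: linf_dist_le => // k; apply: (psi_spec k).1.
by apply/funext => k; apply: (psi_spec k).2.
Qed.

Section IsometricToLinf.
Variables (T : Type) (S : T -> Prop) (D : T -> T -> R) (n : nat).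
Variable F : T -> 'I_n -> R.
Hypothesis F_iso : forall g h, S g -> S h -> linf_dist (F g) (F h) = D g h.
Hypothesis F_inj : forall g h, S g -> S h -> F g = F h -> g = h.
Hypothesis F_onto : forall v, exists g, S g /\ F g = v.

Lemma is_metric_on_isometric : is_metric_on S D.
Proof.
have [ge0 [eq0 [sym tri]]] := is_metric_linf_dist n.
split; [|split; [|split]] => [g h Sg Sh|g h Sg Sh|g h Sg Sh|g h k Sg Sh Sk];
  rewrite -?F_iso //.
- exact: ge0.
- by split=> [/(eq0 _ _ I I)/F_inj|->]; [apply|apply/(eq0 _ _ I I)].
- exact: sym.
- exact: tri.
Qed.

Lemma injective_metric_isometric : injective_metric S D.
Proof.
move=> Y dY Z phi dY_metric S_phi phi_lip.
have [G G_spec] := choice F_onto.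
have Fphi_lip z z' : Z z -> Z z' -> linf_dist (F (phi z)) (F (phi z')) <= dY z z'.
  by move=> Zz Zz'; rewrite F_iso; [exact: phi_lip | exact: S_phi..].
have [psi [_ [psi_lip psi_ext]]] :=
  injective_metric_linf (phi := F \o phi) dY_metric (fun _ _ => I) Fphi_lip.
have SG v : S (G v) := (G_spec v).1.
have FG v : F (G v) = v := (G_spec v).2.
exists (G \o psi); split=> [y|]; first exact: SG.
split=> [y y'|z Zz] /=.
  by rewrite -F_iso // !FG.
by apply: F_inj; [exact: SG | exact: S_phi | rewrite FG psi_ext].
Qed.

End IsometricToLinf.

Lemma exists_nonzero_kernel (F : fieldType) k m (M : 'I_k -> 'I_m -> F) :
  (k < m)%N -> exists c : 'I_m -> F,
    (exists i, c i != 0) /\ forall j, \sum_(i < m) M j i * c i = 0.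
Proof.
move=> lt_km; pose Mt : 'M[F]_(m, k) := \matrix_(i, j) M j i.
have rank_ker : (0 < \rank (kermx Mt))%N.
  by rewrite mxrank_ker subn_gt0 (leq_ltn_trans (rank_leq_col Mt)).
have [i0 [j0 K_neq0]] : exists i0 j0, kermx Mt i0 j0 != 0.
  apply: contrapT => K_eq0; move: rank_ker; suff -> : kermx Mt = 0 by rewrite mxrank0.
  apply/matrixP => i j; rewrite [RHS]mxE; apply/eqP/negPn/negP => Kij.
  by apply: K_eq0; exists i, j.
exists (kermx Mt i0); split; first by exists j0.
move=> j; have /matrixP/(_ i0 j) := mulmx_ker Mt; rewrite !mxE => Kj.
by rewrite -[RHS]Kj; apply: eq_bigr => i _; rewrite mulrC /Mt [X in _ = _ * X]mxE.
Qed.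

(* The direction space H(A) - H(A) of the affine space H(A). *)
Definition HA0 (X : Type) (A : X -> X -> Prop) (u : X -> R) : Prop :=
  forall x y, A x y -> u x + u y = 0.

Section AffineSpaceHA.
Variables (X : Type) (d : X -> X -> R) (A : X -> X -> Prop).

Lemma HA_subr g h : HA d A g -> HA d A h -> HA0 A (fun x => g x - h x).
Proof. by move=> Hg Hh x y Axy; have := Hg x y Axy; have := Hh x y Axy; lra. Qed.

Lemma HA_addr g u : HA d A g -> HA0 A u -> HA d A (fun x => g x + u x).
Proof. by move=> Hg Hu x y Axy; have := Hg x y Axy; have := Hu x y Axy; lra. Qed.

Lemma HA0_sum m (a : 'I_m -> R) (w : 'I_m -> X -> R) :
  (forall i, HA0 A (w i)) -> HA0 A (fun x => \sum_(i < m) a i * w i x).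
Proof.
move=> Hw x y Axy; rewrite -big_split big1 //= => i _.
by rewrite -mulrDr Hw // mulr0.
Qed.

Variables (n : nat) (h0 : X -> R) (b : 'I_n -> X -> R).
Hypothesis HA_span : forall g, HA d A g <->
  exists c : 'I_n -> R, forall x, g x = h0 x + \sum_(i < n) c i * b i x.

Lemma HA_span_base : HA d A h0.
Proof.
apply/HA_span; exists (fun=> 0) => x.
by rewrite big1 ?addr0 // => i _; rewrite mul0r.
Qed.

Lemma HA0_span u : HA0 A u <->
  exists c : 'I_n -> R, forall x, u x = \sum_(i < n) c i * b i x.
Proof.
split=> [Hu|[c u_eq]].
  have [c Hc] := (HA_span _).1 (HA_addr HA_span_base Hu).
  by exists c => x; have := Hc x; lra.
have Hg : HA d A (fun x => h0 x + \sum_(i < n) c i * b i x) by apply/HA_span; exists c.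
move=> x y Axy; have := HA_subr Hg HA_span_base Axy.
by rewrite /= !u_eq; lra.
Qed.

End AffineSpaceHA.

Section LinkedComponents.
Variables (X : Type) (A : X -> X -> Prop).
Local Notation linked := (clos_refl_sym_trans X A).

Lemma HA0_linked_norm u x y : HA0 A u -> linked x y -> `|u x| = `|u y|.
Proof.
move=> Hu; elim=> {x y} [x y Axy|x|x y _ ->|x y z _ -> _ ->] //.
by have /eqP := Hu x y Axy; rewrite addr_eq0 => /eqP->; rewrite normrN.
Qed.

Definition comp_restr (x : X) (u : X -> R) (y : X) : R :=
  if pselect (linked x y) then u y else 0.

Lemma comp_restr_in x u y : linked x y -> comp_restr x u y = u y.
Proof. by rewrite /comp_restr; case: pselect. Qed.

Lemma comp_restr_out x u y : ~ linked x y -> comp_restr x u y = 0.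
Proof. by rewrite /comp_restr; case: pselect. Qed.

Lemma HA0_comp_restr x u : HA0 A u -> HA0 A (comp_restr x u).
Proof.
move=> Hu y z Ayz; have yz : linked y z by apply: rst_step.
have [xy|xy] := pselect (linked x y).
  by rewrite !comp_restr_in ?Hu //; exact: (rst_trans _ _ _ _ _ xy yz).
rewrite !comp_restr_out ?addr0 // => xz; apply: xy.
exact: (rst_trans _ _ _ _ _ xz (rst_sym _ _ _ _ yz)).
Qed.

End LinkedComponents.

Definition essential (X : Type) (A : X -> X -> Prop) (x : X) : Prop :=
  exists u, HA0 A u /\ u x != 0.

Section FiniteRank.
Variables (X : Type) (A : X -> X -> Prop) (n : nat) (b : 'I_n -> X -> R).
Hypothesis b_free : forall c : 'I_n -> R,
  (forall x, \sum_(i < n) c i * b i x = 0) -> forall i, c i = 0.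
Hypothesis HA0_spanP : forall u, HA0 A u <->
  exists c : 'I_n -> R, forall x, u x = \sum_(i < n) c i * b i x.
Local Notation linked := (clos_refl_sym_trans X A).

Lemma HA0_vanishing_on k (p : 'I_k -> X) : (k < n)%N ->
  exists u x, [/\ HA0 A u, u x != 0 & forall j, u (p j) = 0].
Proof.
move=> lt_kn.
have [c [[i0 ci0] c_ker]] := exists_nonzero_kernel (fun j i => b i (p j)) lt_kn.
have Hu : HA0 A (fun x => \sum_(i < n) c i * b i x) by apply/HA0_spanP; exists c.
have /existsNP [x /eqP ux] : ~ forall x, \sum_(i < n) c i * b i x = 0.
  by move=> /b_free /(_ i0) /eqP; rewrite (negbTE ci0).
exists (fun x => \sum_(i < n) c i * b i x), x; split=> // j.
by rewrite -[RHS](c_ker j); apply: eq_bigr => i _; rewrite mulrC.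
Qed.

Lemma unlinked_essential_points k : (k <= n)%N -> exists p : 'I_k -> X,
  (forall i j, i != j -> ~ linked (p i) (p j)) /\ forall i, essential A (p i).
Proof.
elim: k => [|k IH] le_kn.
  by unshelve eexists; [case | split; case].
have [p [p_unlinked p_ess]] := IH (ltnW le_kn).
have [u [x [Hu ux up0]]] := HA0_vanishing_on p le_kn.
have x_unlinked j : ~ linked x (p j).
  move=> /(HA0_linked_norm Hu); rewrite up0 normr0 => /eqP.
  by rewrite normr_eq0 (negbTE ux).
exists (fun i => if unlift ord_max i is Some j then p j else x); split.
  move=> i j /=; case: unliftP => [i' ->|->]; case: unliftP => [j' ->|->].
  - by move=> ij'; apply: p_unlinked; apply: contraNneq ij' => ->.
  - by move=> _ /(rst_sym _ _ _ _); apply: x_unlinked.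
  - by move=> _; apply: x_unlinked.
  - by rewrite eqxx.
by move=> i; case: unliftP => [i' _|_]; [apply: p_ess | exists u].
Qed.

Variable p : 'I_n -> X.
Hypothesis p_unlinked : forall i j, i != j -> ~ linked (p i) (p j).
Hypothesis p_essential : forall i, essential A (p i).

Lemma dual_basis : exists e : 'I_n -> X -> R,
  (forall k, HA0 A (e k)) /\ forall k j, e k (p j) = (k == j)%:R.
Proof.
have [v v_spec] := choice p_essential.
exists (fun k y => comp_restr A (p k) (v k) y / v k (p k)); split.
  move=> k x y Axy; rewrite -mulrDl HA0_comp_restr ?mul0r //.
  exact: (v_spec k).1.
move=> k j; have [<-|kj] := eqVneq k j.
  by rewrite comp_restr_in ?divff //; [exact: (v_spec k).2 | apply: rst_refl].
by rewrite comp_restr_out ?mul0r //; apply: p_unlinked.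
Qed.

Variable e : 'I_n -> X -> R.
Hypothesis e_HA0 : forall k, HA0 A (e k).
Hypothesis e_dual : forall k j, e k (p j) = (k == j)%:R.

(* The matrix of the point evaluations [u |-> u (p j)] has the coefficient
   matrix of the [e k] as a right inverse, hence is invertible. *)
Lemma HA0_eq0_on_frame u : HA0 A u -> (forall j, u (p j) = 0) -> forall x, u x = 0.
Proof.
move=> Hu up0 x.
have [ce ce_spec] := choice (fun k => (HA0_spanP (e k)).1 (e_HA0 k)).
have [cu cu_spec] := (HA0_spanP u).1 Hu.
pose Ev : 'M[R]_n := \matrix_(j, i) b i (p j).
pose Ce : 'M[R]_n := \matrix_(i, k) ce k i.
pose Cu : 'cV[R]_n := \col_i cu i.
have EvCe : Ev *m Ce = 1%:M.
  apply/matrixP => j k; rewrite mxE [RHS]mxE eq_sym -e_dual ce_spec.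
  by apply: eq_bigr => i _; rewrite /Ev /Ce !mxE mulrC.
have EvCu : Ev *m Cu = 0.
  apply/matrixP => j l; rewrite mxE [RHS]mxE -[RHS](up0 j) cu_spec.
  by apply: eq_bigr => i _; rewrite /Ev /Cu !mxE mulrC.
have Cu0 : Cu = 0 by rewrite -[Cu]mul1mx -(mulmx1C EvCe) -mulmxA EvCu mulmx0.
rewrite cu_spec big1 // => i _.
by have /matrixP/(_ i ord0) := Cu0; rewrite !mxE => ->; rewrite mul0r.
Qed.

Lemma essential_linked_frame x : essential A x -> exists k, linked (p k) x.
Proof.
move=> [u [Hu ux]]; apply: contrapT => /forallNP x_unlinked.
suff : comp_restr A x u x = 0.
  by rewrite comp_restr_in; [apply/eqP | exact: rst_refl].
apply: (HA0_eq0_on_frame (HA0_comp_restr x Hu)) => j.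
by rewrite comp_restr_out // => /(rst_sym _ _ _ _); apply: x_unlinked.
Qed.

Lemma HA0_dominated (n_gt0 : (0 < n)%N) u x :
  HA0 A u -> exists k, `|u x| <= `|u (p k)|.
Proof.
move=> Hu; have [ess|not_ess] := pselect (essential A x).
  have [k pk_x] := essential_linked_frame ess.
  by exists k; rewrite (HA0_linked_norm Hu pk_x).
exists (Ordinal n_gt0); have [ux0|ux] := eqVneq (u x) 0.
  by rewrite ux0 normr0.
by case: not_ess; exists u.
Qed.

End FiniteRank.

Section Coordinates.
Variables (X : Type) (d : X -> X -> R) (A : X -> X -> Prop) (n : nat).
Variables (h0 : X -> R) (p : 'I_n -> X) (e : 'I_n -> X -> R).
Hypothesis h0_HA : HA d A h0.
Hypothesis e_HA0 : forall k, HA0 A (e k).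
Hypothesis e_dual : forall k j, e k (p j) = (k == j)%:R.
Hypothesis frame_dominates : forall u x, HA0 A u -> exists k, `|u x| <= `|u (p k)|.

Definition coords (g : X -> R) (k : 'I_n) : R := g (p k) - h0 (p k).

Definition of_coords (t : 'I_n -> R) (x : X) : R :=
  h0 x + \sum_(k < n) t k * e k x.

Lemma HA_of_coords t : HA d A (of_coords t).
Proof. exact: HA_addr h0_HA (HA0_sum t e_HA0). Qed.

Lemma of_coordsK t : coords (of_coords t) = t.
Proof.
apply/funext => j; rewrite /coords /of_coords (bigD1 j) //= e_dual eqxx mulr1.
rewrite big1 ?addr0 => [|k /negbTE kj]; first by rewrite addrAC subrr add0r.
by rewrite e_dual kj mulr0.
Qed.

Lemma HA_dist_le_coords g h x : HA d A g -> HA d A h ->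
  `|g x - h x| <= linf_dist (coords g) (coords h).
Proof.
move=> Hg Hh; have [k le_gh] := frame_dominates x (HA_subr Hg Hh).
apply: le_trans le_gh (le_trans _ (ler_linf_dist _ _ k)).
by rewrite /coords opprB addrA subrK lexx.
Qed.

Lemma coords_inj g h : HA d A g -> HA d A h -> coords g = coords h -> g = h.
Proof.
move=> Hg Hh gh; apply/funext => x; apply/eqP; rewrite -subr_eq0 -normr_le0.
apply: le_trans (HA_dist_le_coords x Hg Hh) _; rewrite gh.
by apply: linf_dist_le => // k; rewrite subrr normr0.
Qed.

Lemma supdist_coords (n_gt0 : (0 < n)%N) g h : HA d A g -> HA d A h ->
  supdist g h = linf_dist (coords g) (coords h).
Proof.
move=> Hg Hh; apply: sup_attained => [|_ [x _ <-]]; last exact: HA_dist_le_coords.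
have [k ->] := linf_dist_attained n_gt0 (coords g) (coords h).
by exists (p k); rewrite /coords ?opprB ?addrA ?subrK.
Qed.

Lemma affine_isometry_coords (n_gt0 : (0 < n)%N) :
  affine_isometry_onto (HA d A) (@supdist X) coords.
Proof.
split; [|split] => [g h t _ _|g h Hg Hh|v].
- by apply/funext => k; rewrite /coords; ring.
- by rewrite supdist_coords.
- by exists (of_coords v); split; [exact: HA_of_coords | exact: of_coordsK].
Qed.

End Coordinates.

Theorem lemma4p1 (X : Type) (d : X -> X -> R) (A : X -> X -> Prop) (n : nat) :
  is_metric d -> in_scrA d A -> (1 <= n)%N -> rk_eq d A n ->
  (forall g h, HA d A g -> HA d A h -> exists M : R, forall x, `|g x - h x| <= M) /\
  is_metric_on (HA d A) (@supdist X) /\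
  (exists F : (X -> R) -> ('I_n -> R),
     affine_isometry_onto (HA d A) (@supdist X) F) /\
  injective_metric (HA d A) (@supdist X).
Proof.
move=> _ _ n_gt0 [h0 [b [b_free HA_spanP]]].
have h0_HA := HA_span_base HA_spanP.
have HA0_spanP := HA0_span HA_spanP.
have [p [p_unlinked p_ess]] := unlinked_essential_points b_free HA0_spanP (leqnn n).
have [e [e_HA0 e_dual]] := dual_basis p_unlinked p_ess.
have dominated := HA0_dominated HA0_spanP e_HA0 e_dual n_gt0.
have coords_iso := affine_isometry_coords h0_HA e_HA0 e_dual dominated n_gt0.
have [_ [iso onto]] := coords_iso.
have inj := coords_inj (d := d) (h0 := h0) dominated.
split.
  move=> g h Hg Hh; exists (linf_dist (coords h0 p g) (coords h0 p h)) => x.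
  exact (HA_dist_le_coords h0 dominated x Hg Hh).
split; first exact: is_metric_on_isometric iso inj.
by split; [exists (coords h0 p) | exact: injective_metric_isometric iso inj onto].
Qed.
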